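(* Let $\Theta=(\theta,w)$ be a twisted partial action of a group $G$ on an inverse semigroup $S$. Then the crossed product $S*_\Theta G$ is an inverse semigroup, and for every $s\delta_x\in S*_\Theta G$, $$(s\delta_x)^{-1}=w_{x^{-1},x}^{-1}\theta_{x^{-1}}(s^{-1})\delta_{x^{-1}}.$$
   Context: A multiplier of a semigroup $T$ is a pair $(L,R)$ of maps $T\to T$ with $L(st)=L(s)t$, $R(st)=sR(t)$, $sL(t)=R(s)t$; write $ws=L(s)$, $sw=R(s)$. Multipliers form a monoid $\mathcal M(T)$ with $(L,R)(L',R')=(L\circ L',R'\circ R)$, with unit group $\mathcal U(\mathcal M(T))$. A twisted partial action of $G$ on a semigroup $S$ is $\Theta=(\theta,w)$, where $\theta_x:D_{x^{-1}}\to D_x$ ($x\in G$) are isomorphisms between nonempty ideals of $S$ and $w_{x,y}\in\mathcal U(\mathcal M(D_xD_{xy}))$, such that (i) $D_x^2=D_x$, $D_xD_y=D_yD_x$; (ii) $D_1=S$, $\theta_1=\mathrm{id}_S$; (iii) $\theta_x(D_{x^{-1}}D_y)=D_xD_{xy}$; (iv) $\theta_x(\theta_y(s))=w_{x,y}\theta_{xy}(s)w_{x,y}^{-1}$ for $s\in D_{y^{-1}}D_{y^{-1}x^{-1}}$; (v) $w_{1,x}=w_{x,1}$ are the identity multiplier of $D_x$; (vi) $\theta_x(sw_{y,z})w_{x,yz}=\theta_x(s)w_{x,y}w_{xy,z}$ for $s\in D_{x^{-1}}D_yD_{yz}$. The crossed product is $S*_\Theta G=\{s\delta_x: x\in G,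 s\in D_x\}$ with $s\delta_x\cdot t\delta_y=\theta_x(\theta_x^{-1}(s)t)w_{x,y}\delta_{xy}$; it is an associative semigroup. *)

Set Implicit Arguments.

Record Grp := {
  gcar :> Type;
  gmul : gcar -> gcar -> gcar;
  gone : gcar;
  ginv : gcar -> gcar;
  gmulA : forall x y z, gmul x (gmul y z) = gmul (gmul x y) z;
  gmul1l : forall x, gmul gone x = x;
  gmul1r : forall x, gmul x gone = x;
  gmulVl : forall x, gmul (ginv x) x = gone;
  gmulVr : forall x, gmul x (ginv x) = gone
}.

Section SemigroupNotions.
Variable S : Type.
Variable mul : S -> S -> S.

Definition associative_op : Prop :=
  forall a b c, mul a (mul b c) = mul (mul a b) c.

Definition is_inverse_semigroup : Prop :=
  associative_op /\
  forall a, exists b, (mul (mul a b) a = a /\ mul (mul b a) b = b) /\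
    forall b', mul (mul a b') a = a -> mul (mul b' a) b' = b' -> b' = b.

Definition set_eq (A B : S -> Prop) : Prop := forall u, A u <-> B u.

Definition setmul (A B : S -> Prop) : S -> Prop :=
  fun u => exists a b, A a /\ B b /\ u = mul a b.

Definition is_ideal (A : S -> Prop) : Prop :=
  (exists s, A s) /\ forall s t, A s -> A (mul s t) /\ A (mul t s).

Definition image (f : S -> S) (A : S -> Prop) : S -> Prop :=
  fun u => exists s, A s /\ u = f s.

(** (L,R) is a multiplier of the subsemigroup I (maps are considered on I;
    we write w s = L s, s w = R s). *)
Definition is_multiplier (I : S -> Prop) (L R : S -> S) : Prop :=
  (forall s, I s -> I (L s)) /\ (forall s, I s -> I (R s)) /\
  forall s t, I s -> I t ->
    L (mul s t) = mul (L s) t /\ R (mul s t) = mul s (R t) /\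
    mul s (L t) = mul (R s) t.

(** (L,R) is a unit of the monoid M(I) of multipliers, with inverse (Li,Ri);
    product (L,R)(L',R') = (L o L', R' o R), unit = identity on I. *)
Definition is_unit_multiplier (I : S -> Prop) (L R Li Ri : S -> S) : Prop :=
  is_multiplier I L R /\ is_multiplier I Li Ri /\
  forall s, I s -> L (Li s) = s /\ Li (L s) = s /\ R (Ri s) = s /\ Ri (R s) = s.

End SemigroupNotions.

(** * Data of a twisted partial action of G on S.
    theta x : D (x^-1) -> D x, with inverse map thetainv x : D x -> D (x^-1);
    w x y = (wL x y, wR x y) a multiplier of D x D (x y), with inverse
    w x y ^-1 = (wLi x y, wRi x y).  Maps are total functions on S, only
    their values on the relevant domains matter. *)
Record TPAData (G : Grp) (S : Type) := {
  tD : G -> S -> Prop;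
  ttheta : G -> S -> S;
  tthetainv : G -> S -> S;
  twL : G -> G -> S -> S;
  twR : G -> G -> S -> S;
  twLi : G -> G -> S -> S;
  twRi : G -> G -> S -> S
}.

Section TPA.
Variables (G : Grp) (S : Type) (mul : S -> S -> S).
Variable T : TPAData G S.

Local Notation "x * y" := (gmul G x y).
Local Notation "x ^-1" := (ginv G x) (at level 2, format "x ^-1").
Local Notation "1" := (gone G).
Local Notation D := (tD T).
Local Notation theta := (ttheta T).
Local Notation thinv := (tthetainv T).
Local Notation wL := (twL T).
Local Notation wR := (twR T).
Local Notation wLi := (twLi T).
Local Notation wRi := (twRi T).
Local Notation "A ** B" := (setmul mul A B) (at level 40, left associativity).

Definition is_iso_on (x : G) : Prop :=
  (forall s, D (x^-1) s -> D x (theta x s)) /\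
  (forall t, D x t -> D (x^-1) (thinv x t)) /\
  (forall s t, D (x^-1) s -> D (x^-1) t ->
      theta x (mul s t) = mul (theta x s) (theta x t)) /\
  (forall s, D (x^-1) s -> thinv x (theta x s) = s) /\
  (forall t, D x t -> theta x (thinv x t) = t).

Definition is_twisted_partial_action : Prop :=
  (forall x, is_ideal mul (D x)) /\
  (forall x, is_iso_on x) /\
  (forall x y, is_unit_multiplier mul (D x ** D (x * y))
                  (wL x y) (wR x y) (wLi x y) (wRi x y)) /\
  (forall x, set_eq (D x ** D x) (D x)) /\
  (forall x y, set_eq (D x ** D y) (D y ** D x)) /\
  (forall s, D 1 s) /\
  (forall s, theta 1 s = s) /\
  (forall x y, set_eq (image (theta x) (D (x^-1) ** D y)) (D x ** D (x * y))) /\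
  (* (iv) theta_x(theta_y s) = w_{x,y} theta_{xy}(s) w_{x,y}^-1 *)
  (forall x y s, (D (y^-1) ** D (y^-1 * x^-1)) s ->
      theta x (theta y s) = wRi x y (wL x y (theta (x * y) s))) /\
  (* (v) w_{1,x} = w_{x,1} = identity multiplier of D x *)
  (forall x s, D x s ->
      wL 1 x s = s /\ wR 1 x s = s /\ wL x 1 s = s /\ wR x 1 s = s) /\
  (* (vi) theta_x(s w_{y,z}) w_{x,yz} = theta_x(s) w_{x,y} w_{xy,z} *)
  (forall x y z s, (D (x^-1) ** D y ** D (y * z)) s ->
      wR x (y * z) (theta x (wR y z s)) = wR (x * y) z (wR x y (theta x s))).

(** * Crossed product S *_Theta G, as the set of pairs (s, x) with s in D x,
    i.e. s delta_x, with multiplication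
    s delta_x . t delta_y = theta_x(theta_x^-1(s) t) w_{x,y} delta_{xy}. *)
Definition cp_carrier (p : S * G) : Prop := D (snd p) (fst p).

Definition cp_mul (p q : S * G) : S * G :=
  let (s, x) := p in let (t, y) := q in
  (wR x y (theta x (mul (thinv x s) t)), x * y).

End TPA.

Set Implicit Arguments.
Unset Strict Implicit.

(** For [x y = 1] the product [s δ_x · t δ_y] lands in [D_x δ_1], namely
    [s · θ_x(t) w_{x,y}], and the map [t ↦ θ_x(t) w_{x,x⁻¹}] is injective on
    [D_{x⁻¹}] and turns [t θ_{x⁻¹}(s) w_{x⁻¹,x} t] into
    [θ_x(t) w_{x,x⁻¹} · s · θ_x(t) w_{x,x⁻¹}].  Hence [t δ_{x⁻¹}] is an inverse
    of [s δ_x] exactly when [θ_x(t) w_{x,x⁻¹}] is an inverse of [s] in [S], and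
    every inverse of [s δ_x] has degree [x⁻¹]; uniqueness of inverses in [S]
    then gives existence and uniqueness in the crossed product.  The explicit
    inverse comes from the axioms (iv) and (vi) specialised to [y = x⁻¹], which
    relate [θ_x θ_{x⁻¹}] and [θ_x(· w_{x⁻¹,x})] to the twist [w_{x,x⁻¹}]. *)

Section GroupFacts.
Variable G : Grp.
Local Notation "x * y" := (gmul G x y).
Local Notation "x ^-1" := (ginv G x) (at level 2, format "x ^-1").
Local Notation "1" := (gone G).

Lemma ginv_unique x y : x * y = 1 -> y = x^-1.
Proof.
  intro Hxy.
  now rewrite <- (gmul1l G y), <- (gmulVl G x), <- gmulA, Hxy, gmul1r.
Qed.

Lemma ginvK x : (x^-1)^-1 = x.
Proof. symmetry. apply ginv_unique, gmulVl. Qed.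

Lemma gmul_cancel_idem x y : x * y * x = x -> x * y = 1.
Proof.
  intro Hxyx.
  now rewrite <- (gmul1r G (x * y)), <- (gmulVr G x), gmulA, Hxyx.
Qed.

End GroupFacts.

Lemma ideal_sinv (S : Type) (mul : S -> S -> S) (sinv : S -> S) (I : S -> Prop) :
  (forall s, mul (mul (sinv s) s) (sinv s) = sinv s) ->
  is_ideal mul I -> forall s, I s -> I (sinv s).
Proof.
  intros Hsinv [_ HI] s Hs. rewrite <- (Hsinv s).
  apply (HI _ _ (proj2 (HI _ _ Hs))).
Qed.

Section UnitMultipliers.
Variables (S : Type) (mul : S -> S -> S) (I : S -> Prop).

Record unit_multiplier_on (L R Li Ri : S -> S) : Prop := {
  um_L : forall s, I s -> I (L s);
  um_R : forall s, I s -> I (R s);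
  um_Li : forall s, I s -> I (Li s);
  um_Ri : forall s, I s -> I (Ri s);
  um_R_mul : forall s t, I s -> I t -> R (mul s t) = mul s (R t);
  um_LR : forall s t, I s -> I t -> mul s (L t) = mul (R s) t;
  um_Li_mul : forall s t, I s -> I t -> Li (mul s t) = mul (Li s) t;
  um_Ri_mul : forall s t, I s -> I t -> Ri (mul s t) = mul s (Ri t);
  um_LiK : forall s, I s -> Li (L s) = s;
  um_RK : forall s, I s -> R (Ri s) = s;
  um_RiK : forall s, I s -> Ri (R s) = s
}.

Lemma unit_multiplier_on_set_eq J L R Li Ri :
  set_eq I J -> is_unit_multiplier mul J L R Li Ri -> unit_multiplier_on L R Li Ri.
Proof.
  intros EIJ [[HL [HR Hmul]] [[HLi [HRi Himul]] Hinv]].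
  constructor; intros; repeat match goal with H : I _ |- _ => apply EIJ in H end;
    try apply EIJ; firstorder.
Qed.

Lemma unit_multiplier_on_inv_comm L R Li Ri :
  unit_multiplier_on L R Li Ri -> (forall u, I u -> setmul mul I I u) ->
  forall s, I s -> Li (Ri s) = Ri (Li s).
Proof.
  intros M Hfact s Hs. destruct (Hfact s Hs) as (a & b & Ha & Hb & ->).
  pose proof (um_Li M) as HLi. pose proof (um_Ri M) as HRi.
  rewrite (um_Ri_mul M), (um_Li_mul M), (um_Li_mul M), (um_Ri_mul M); auto.
Qed.

End UnitMultipliers.

Section CrossedProduct.
Variables (G : Grp) (S : Type) (mul : S -> S -> S) (sinv : S -> S).
Hypothesis HS : is_inverse_semigroup mul.
Hypothesis Hsinv :
  forall s, mul (mul s (sinv s)) s = s /\ mul (mul (sinv s) s) (sinv s) = sinv s.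
Variable T : TPAData G S.
Hypothesis HT : is_twisted_partial_action mul T.

Local Notation "x * y" := (gmul G x y).
Local Notation "x ^-1" := (ginv G x) (at level 2, format "x ^-1").
Local Notation "1" := (gone G).
Local Notation D := (tD T).
Local Notation th := (ttheta T).
Local Notation thi := (tthetainv T).
Local Notation wL := (twL T).
Local Notation wR := (twR T).
Local Notation wLi := (twLi T).
Local Notation wRi := (twRi T).
Local Notation "A ** B" := (setmul mul A B) (at level 40, left associativity).
Local Notation cpm := (cp_mul mul T).

Lemma D_ideal x : is_ideal mul (D x).
Proof. destruct HT as (H & _). apply H. Qed.

Lemma D_mulr x s t : D x s -> D x (mul s t).
Proof. destruct (D_ideal x) as [_ H]. intro Hs. exact (proj1 (H s t Hs)). Qed.

Lemma D_mull x s t : D x t -> D x (mul s t).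
Proof. destruct (D_ideal x) as [_ H]. intro Ht. exact (proj2 (H t s Ht)). Qed.

Lemma D_sinv x s : D x s -> D x (sinv s).
Proof. apply (@ideal_sinv S mul); [intro s'; apply Hsinv | apply D_ideal]. Qed.

Lemma D_factor x u : D x u -> (D x ** D x) u.
Proof. destruct HT as (_ & _ & _ & H & _). apply H. Qed.

Lemma D1 s : D 1 s.
Proof. destruct HT as (_ & _ & _ & _ & _ & H & _). apply H. Qed.

Lemma D_setmul_D1 x : set_eq (D x ** D 1) (D x).
Proof.
  intro u. split.
  - intros (a & b & Ha & _ & ->). now apply D_mulr.
  - intro Hu. destruct (D_factor Hu) as (a & b & Ha & _ & ->).
    exists a, b. auto using D1.
Qed.

Lemma theta_D x s : D (x^-1) s -> D x (th x s).
Proof. destruct HT as (_ & H & _). apply H. Qed.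

Lemma thetainv_D x s : D x s -> D (x^-1) (thi x s).
Proof. destruct HT as (_ & H & _). apply H. Qed.

Lemma theta_mul x s t :
  D (x^-1) s -> D (x^-1) t -> th x (mul s t) = mul (th x s) (th x t).
Proof. destruct HT as (_ & H & _). apply H. Qed.

Lemma thetaK x s : D (x^-1) s -> thi x (th x s) = s.
Proof. destruct HT as (_ & H & _). apply H. Qed.

Lemma thetainvK x s : D x s -> th x (thi x s) = s.
Proof. destruct HT as (_ & H & _). apply H. Qed.

Lemma theta1 s : th 1 s = s.
Proof. destruct HT as (_ & _ & _ & _ & _ & _ & H & _). apply H. Qed.

Lemma thetainv1 s : thi 1 s = s.
Proof.
  rewrite <- (theta1 (thi 1 s)). apply thetainvK, D1.
Qed.

Lemma theta_inv_D x s : D x s -> D (x^-1) (th x^-1 s).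
Proof. intro Hs. apply theta_D. now rewrite ginvK. Qed.

Lemma w_unit_multiplier x y : x * y = 1 ->
  unit_multiplier_on mul (D x) (wL x y) (wR x y) (wLi x y) (wRi x y).
Proof.
  intro Hxy. apply unit_multiplier_on_set_eq with (J := D x ** D (x * y)).
  - rewrite Hxy. intro u. split; apply D_setmul_D1.
  - destruct HT as (_ & _ & H & _). apply H.
Qed.

Lemma w_trivial x s : D x s ->
  wL 1 x s = s /\ wR 1 x s = s /\ wL x 1 s = s /\ wR x 1 s = s.
Proof. destruct HT as (_ & _ & _ & _ & _ & _ & _ & _ & _ & H & _). apply H. Qed.

Lemma theta_theta x y s : (D (y^-1) ** D (y^-1 * x^-1)) s ->
  th x (th y s) = wRi x y (wL x y (th (x * y) s)).
Proof. destruct HT as (_ & _ & _ & _ & _ & _ & _ & _ & H & _). apply H. Qed.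

Lemma w_cocycle x y z s : (D (x^-1) ** D y ** D (y * z)) s ->
  wR x (y * z) (th x (wR y z s)) = wR (x * y) z (wR x y (th x s)).
Proof. destruct HT as (_ & _ & _ & _ & _ & _ & _ & _ & _ & _ & H). apply H. Qed.

Lemma theta_theta_inv x s : D x s -> th x (th x^-1 s) = wRi x x^-1 (wL x x^-1 s).
Proof.
  intro Hs. rewrite theta_theta, gmulVr, theta1; [reflexivity|].
  rewrite ginvK, gmulVr. now apply D_setmul_D1.
Qed.

Lemma theta_inv_theta x u :
  D (x^-1) u -> th x^-1 (th x u) = wRi x^-1 x (wL x^-1 x u).
Proof.
  intro Hu. rewrite theta_theta, gmulVl, theta1; [reflexivity|].
  rewrite ginvK, gmulVl. now apply D_setmul_D1.
Qed.

(** Axiom (vi) with [(y, z) = (x⁻¹, x)]; both outer twists are trivial by (v). *)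
Lemma theta_w_inv x u :
  D (x^-1) u -> th x (wR x^-1 x u) = wR x x^-1 (th x u).
Proof.
  intro Hu.
  assert (Hdom : (D (x^-1) ** D (x^-1) ** D (x^-1 * x)) u).
  { rewrite gmulVl. destruct (D_factor Hu) as (a & b & Ha & _ & ->).
    destruct (D_factor Ha) as (a1 & a2 & Ha1 & Ha2 & ->).
    exists (mul a1 a2), b. split; [exists a1, a2; auto | auto using D1]. }
  pose proof (w_cocycle Hdom) as Hvi. rewrite gmulVl, gmulVr in Hvi.
  destruct (w_trivial (theta_D (um_R (w_unit_multiplier (gmulVl G x)) Hu)))
    as (_ & _ & _ & Htriv_l).
  destruct (w_trivial (um_R (w_unit_multiplier (gmulVr G x)) (theta_D Hu)))
    as (_ & Htriv_r & _).
  now rewrite <- Htriv_l, <- Htriv_r.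
Qed.

Lemma theta_theta_inv_w x s :
  D x s -> th x (wR x^-1 x (th x^-1 s)) = wL x x^-1 s.
Proof.
  intro Hs. pose proof (w_unit_multiplier (gmulVr G x)) as M.
  rewrite theta_w_inv, theta_theta_inv by auto using theta_inv_D.
  apply (um_RK M), (um_L M), Hs.
Qed.

Lemma cp_carrier_mul p q :
  cp_carrier T p -> cp_carrier T q -> cp_carrier T (cpm p q).
Proof.
  destruct p as [s x], q as [t y]. unfold cp_carrier, cp_mul; simpl. intros Hs Ht.
  destruct HT as (_ & _ & Hw & _ & _ & _ & _ & Hiii & _).
  destruct (Hw x y) as ((_ & HR & _) & _).
  assert (Himg : (D x ** D (x * y)) (th x (mul (thi x s) t))).
  { apply Hiii. exists (mul (thi x s) t). split; [|reflexivity].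
    exists (thi x s), t. auto using thetainv_D. }
  destruct (HR _ Himg) as (a & b & _ & Hb & ->). now apply D_mull.
Qed.

Definition theta_w x y t := wR x y (th x t).

Lemma theta_w_inj x t1 t2 : D (x^-1) t1 -> D (x^-1) t2 ->
  theta_w x x^-1 t1 = theta_w x x^-1 t2 -> t1 = t2.
Proof.
  unfold theta_w. intros H1 H2 E.
  pose proof (um_RiK (w_unit_multiplier (gmulVr G x))) as RiK.
  rewrite <- (thetaK H1), <- (thetaK H2), <- (RiK (th x t1)), <- (RiK (th x t2)), E;
    auto using theta_D.
Qed.

Lemma theta_w_conj x s t : D x s -> D (x^-1) t ->
  theta_w x x^-1 (mul (mul t (theta_w x^-1 x s)) t) =
  mul (mul (theta_w x x^-1 t) s) (theta_w x x^-1 t).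
Proof.
  unfold theta_w. intros Hs Ht.
  pose proof (w_unit_multiplier (gmulVr G x)) as M.
  assert (Hd : D (x^-1) (wR x^-1 x (th x^-1 s)))
    by apply (um_R (w_unit_multiplier (gmulVl G x))), theta_inv_D, Hs.
  pose proof (um_L M) as HL.
  rewrite theta_mul, theta_mul, theta_theta_inv_w by auto using D_mulr.
  rewrite (um_R_mul M), (um_LR M); auto using theta_D, D_mulr.
Qed.

Lemma theta_w_sinv x s : D x s ->
  theta_w x x^-1 (wLi x^-1 x (th x^-1 (sinv s))) = sinv s.
Proof.
  unfold theta_w. intro Hs.
  pose proof (w_unit_multiplier (gmulVl G x)) as M.
  assert (Hu : D (x^-1) (thi x (sinv s))) by apply thetainv_D, D_sinv, Hs.
  pose proof (um_L M) as HL. pose proof (um_Ri M) as HRi.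
  replace (th x^-1 (sinv s)) with (th x^-1 (th x (thi x (sinv s))))
    by now rewrite thetainvK by apply D_sinv, Hs.
  rewrite theta_inv_theta, (unit_multiplier_on_inv_comm M), (um_LiK M),
    <- theta_w_inv, (um_RK M), thetainvK; auto using D_sinv, D_factor.
Qed.

Lemma cp_mul_inv_degree s x t y : D x s -> D y t -> x * y = 1 ->
  cpm (s, x) (t, y) = (mul s (theta_w x y t), 1).
Proof.
  intros Hs Ht Hxy. pose proof (ginv_unique Hxy). subst y.
  unfold cp_mul, theta_w. rewrite gmulVr. f_equal.
  rewrite theta_mul, thetainvK by auto using thetainv_D.
  apply (um_R_mul (w_unit_multiplier (gmulVr G x))); auto using theta_D.
Qed.

Lemma cp_mul1l e s x : D x s -> cpm (e, 1) (s, x) = (mul e s, x).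
Proof.
  intros Hs. unfold cp_mul. rewrite thetainv1, theta1, gmul1l. f_equal.
  apply w_trivial, D_mull, Hs.
Qed.

Lemma cp_inverseP s x t : D x s -> D (x^-1) t ->
  (cpm (cpm (s, x) (t, x^-1)) (s, x) = (s, x) /\
   cpm (cpm (t, x^-1) (s, x)) (t, x^-1) = (t, x^-1)) <->
  (mul (mul s (theta_w x x^-1 t)) s = s /\
   mul (mul (theta_w x x^-1 t) s) (theta_w x x^-1 t) = theta_w x x^-1 t).
Proof.
  intros Hs Ht.
  rewrite cp_mul_inv_degree, cp_mul1l, cp_mul_inv_degree, cp_mul1l
    by auto using gmulVr, gmulVl, D_mulr.
  split; intros [E1 E2].
  - injection E1 as E1. injection E2 as E2.
    split; [exact E1|]. now rewrite <- (theta_w_conj Hs Ht), E2.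
  - split; [now rewrite E1|]. f_equal. apply (theta_w_inj (x := x)); [| exact Ht |].
    + apply D_mulr, D_mull, (um_R (w_unit_multiplier (gmulVl G x))), theta_inv_D, Hs.
    + now rewrite (theta_w_conj Hs Ht).
Qed.

Lemma cp_inverse s x : D x s ->
  let p' := (wLi x^-1 x (th x^-1 (sinv s)), x^-1) in
  cp_carrier T p' /\
  cpm (cpm (s, x) p') (s, x) = (s, x) /\
  cpm (cpm p' (s, x)) p' = p' /\
  (forall b', cp_carrier T b' ->
     cpm (cpm (s, x) b') (s, x) = (s, x) -> cpm (cpm b' (s, x)) b' = b' -> b' = p').
Proof.
  intros Hs p'. unfold p', cp_carrier; simpl.
  assert (Ht' : D (x^-1) (wLi x^-1 x (th x^-1 (sinv s))))
    by apply (um_Li (w_unit_multiplier (gmulVl G x))), theta_inv_D, D_sinv, Hs.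
  assert (Hinv := cp_inverseP Hs Ht'). rewrite theta_w_sinv in Hinv by exact Hs.
  destruct (proj2 Hinv (Hsinv s)) as [E1 E2].
  split; [exact Ht'|]. split; [exact E1|]. split; [exact E2|].
  intros [t y] Ht Eb1 Eb2. simpl in Ht.
  assert (Hy : y = x^-1).
  { apply ginv_unique, gmul_cancel_idem. exact (f_equal snd Eb1). }
  subst y. destruct (proj1 (cp_inverseP Hs Ht) (conj Eb1 Eb2)) as [Es1 Es2].
  destruct HS as [_ Huniq]. destruct (Huniq s) as [b [_ Hb]].
  assert (Hsinv_b : sinv s = b) by (destruct (Hsinv s); now apply Hb).
  f_equal. apply (theta_w_inj Ht Ht').
  rewrite theta_w_sinv, (Hb _ Es1 Es2), Hsinv_b by exact Hs. reflexivity.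
Qed.

End CrossedProduct.

Theorem lemma5p12 (G : Grp) (S : Type) (mul : S -> S -> S) (sinv : S -> S)
  (HS : is_inverse_semigroup mul)
  (Hsinv : forall s, mul (mul s (sinv s)) s = s /\ mul (mul (sinv s) s) (sinv s) = sinv s)
  (T : TPAData G S)
  (HT : is_twisted_partial_action mul T) :
  (forall p q, cp_carrier T p -> cp_carrier T q ->
      cp_carrier T (cp_mul mul T p q)) /\
  (forall p, cp_carrier T p -> exists b, cp_carrier T b /\
      (cp_mul mul T (cp_mul mul T p b) p = p /\
       cp_mul mul T (cp_mul mul T b p) b = b) /\
      forall b', cp_carrier T b' ->
        cp_mul mul T (cp_mul mul T p b') p = p ->
        cp_mul mul T (cp_mul mul T b' p) b' = b' -> b' = b) /\
  (forall (s : S) (x : G), tD T x s ->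
    let p' := (twLi T (ginv G x) x (ttheta T (ginv G x) (sinv s)), ginv G x) in
    cp_carrier T p' /\
    cp_mul mul T (cp_mul mul T (s, x) p') (s, x) = (s, x) /\
    cp_mul mul T (cp_mul mul T p' (s, x)) p' = p' /\
    (forall b', cp_carrier T b' ->
        cp_mul mul T (cp_mul mul T (s, x) b') (s, x) = (s, x) ->
        cp_mul mul T (cp_mul mul T b' (s, x)) b' = b' -> b' = p')).
Proof.
  split; [exact (cp_carrier_mul HT)|].
  split; [|exact (cp_inverse HS Hsinv HT)].
  intros [s x] Hp.
  destruct (cp_inverse HS Hsinv HT Hp) as (Hc & E1 & E2 & Huniq).
  eexists. eauto.
Qed.
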